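(* Let $g$ be an element of $A$ or of $B$ with $g\notin H$. Then there exists an integer $t_0>1$ such that for every positive integer $t$ divisible by $t_0$, $g\rho_t\notin H\rho_t$.
   Context: Fix integers $m,n>1$ and let $G_{mn}=\langle a,b;\ [a^m,b^n]=1\rangle$. Put $c=a^m$, $d=b^n$, $H=\langle c,d\rangle$ (free abelian with basis $c,d$), $A=\langle a,H\rangle$, $B=\langle b,H\rangle$. For an integer $t>1$ let $G_{mn}(t)=\langle a,b;\ [a^m,b^n]=1,\ a^{mt}=b^{nt}=1\rangle$ and let $\rho_t:G_{mn}\to G_{mn}(t)$ be the natural homomorphism. *)

(* Finitely presented groups are encoded by words
   over the generators a, b and the congruence generated by free cancellation
   and the relators (i.e. the quotient of the free group by the normal closure
   of the relators). *)
From Stdlib Require Import Relations.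
From Stdlib Require List.
From mathcomp Require Import all_boot.

Set Implicit Arguments.
Unset Strict Implicit.
Unset Printing Implicit Defensive.

(* A letter: (generator, inverted?).  generator false = a, true = b. *)
Definition letter := (bool * bool)%type.
Definition word := seq letter.

Definition linv (x : letter) : letter := (x.1, ~~ x.2).
Definition winv (w : word) : word := rev (map linv w).

Inductive step (R : seq word) : word -> word -> Prop :=
| step_free (p q : word) (x : letter) : step R (p ++ x :: linv x :: q) (p ++ q)
| step_rel (p q r : word) : List.In r R -> step R (p ++ r ++ q) (p ++ q).

Definition weq (R : seq word) : word -> word -> Prop :=
  clos_refl_sym_trans word (step R).

Inductive in_gen (S : seq word) : word -> Prop :=
| gen_nil : in_gen S [::]
| gen_cons (s w : word) : List.In s S -> in_gen S w -> in_gen S (s ++ w)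
| gen_consinv (s w : word) : List.In s S -> in_gen S w -> in_gen S (winv s ++ w).

Definition mem_sub (R : seq word) (S : seq word) (g : word) : Prop :=
  exists h, in_gen S h /\ weq R g h.

Definition apow (k : nat) : word := nseq k (false, false).
Definition bpow (k : nat) : word := nseq k (true, false).
Definition comm (u v : word) : word := winv u ++ winv v ++ u ++ v.

Definition rels (m n : nat) : seq word := [:: comm (apow m) (bpow n)].
Definition rels_t (m n t : nat) : seq word :=
  [:: comm (apow m) (bpow n); apow (m * t); bpow (n * t)].

(* H = <c, d>, A = <a, H>, B = <b, H> with c = a^m, d = b^n *)
Definition Hgens (m n : nat) : seq word := [:: apow m; bpow n].
Definition Agens (m n : nat) : seq word := [:: apow 1; apow m; bpow n].
Definition Bgens (m n : nat) : seq word := [:: bpow 1; apow m; bpow n].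

From Stdlib Require Import Relations.
From mathcomp Require Import all_boot zify.

(* Let g lie in A = <a, c, d> (for B exchange the roles of a and b).  As c = a^m commutes
   with a and with d, g = w h with h in H and w an alternating product of syllables a^k
   (0 < k < m) and d^j (j <> 0); if w has no a-syllable, g lies in H.  Otherwise take t larger
   than the sum of the |j|.  Then a |-> x, b |-> y maps G_mn(t) onto the free product
   <x | x^m> * <y | y^(nt)>, sending H into <y>, whereas the image of w is a reduced word
   still containing a syllable x^k.  The free product is realised by its action on its
   reduced words. *)

Set Implicit Arguments.
Unset Strict Implicit.
Unset Printing Implicit Defensive.

Lemma linvK : involutive linv.
Proof. by case=> g b; rewrite /linv negbK. Qed.

Lemma winv_cat w w' : winv (w ++ w') = winv w' ++ winv w.
Proof. by rewrite /winv map_cat rev_cat. Qed.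

Lemma winvK : involutive winv.
Proof. by elim=> // l w IH; rewrite -cat1s !winv_cat IH /winv /= linvK. Qed.

Lemma winv_nseq k l : winv (nseq k l) = nseq k (linv l).
Proof. by rewrite /winv map_nseq rev_nseq. Qed.

Section WordEquality.
Variable R : seq word.

Lemma weq_refl w : weq R w w. Proof. exact: rst_refl. Qed.
Lemma weq_sym w w' : weq R w w' -> weq R w' w. Proof. exact: rst_sym. Qed.
Lemma weq_trans w1 w2 w3 : weq R w1 w2 -> weq R w2 w3 -> weq R w1 w3.
Proof. exact: rst_trans. Qed.

Lemma step_cat p w w' q : step R w w' -> step R (p ++ w ++ q) (p ++ w' ++ q).
Proof.
case=> [p0 q0 x|p0 q0 r Rr].
  by have := step_free R (p ++ p0) (q0 ++ q) x; rewrite -!catA.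
by have := step_rel (p ++ p0) (q0 ++ q) Rr; rewrite -!catA.
Qed.

Lemma weq_cat p w w' q : weq R w w' -> weq R (p ++ w ++ q) (p ++ w' ++ q).
Proof.
elim=> [x y xy|x|x y _ IH|x y z _ IHxy _ IHyz].
- by apply: rst_step; apply: step_cat.
- exact: weq_refl.
- exact: weq_sym.
- exact: weq_trans IHxy IHyz.
Qed.

Lemma weq_catl p w w' : weq R w w' -> weq R (p ++ w) (p ++ w').
Proof. by move/(weq_cat p [::]); rewrite !cats0. Qed.

Lemma weq_catr w w' q : weq R w w' -> weq R (w ++ q) (w' ++ q).
Proof. exact: weq_cat [::] w w' q. Qed.

Lemma weq_cancel p w q : weq R (p ++ w ++ winv w ++ q) (p ++ q).
Proof.
elim: w p q => [|l w IH] p q; first exact: weq_refl.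
rewrite -cat1s winv_cat -!catA /=.
have := IH (rcons p l) (linv l :: q); rewrite !cat_rcons => /weq_trans; apply.
by apply: rst_step; apply: step_free.
Qed.

Lemma weq_cancel_inv p w q : weq R (p ++ winv w ++ w ++ q) (p ++ q).
Proof. by have := weq_cancel p (winv w) q; rewrite winvK. Qed.

Lemma weq_nseq_cancel l i j w : i <= j ->
  weq R (nseq i l ++ nseq j (linv l) ++ w) (nseq (j - i) (linv l) ++ w).
Proof.
move=> le_ij; rewrite -{1}(subnKC le_ij) nseqD -catA -(winv_nseq i l).
exact: weq_cancel [::] (nseq i l) _.
Qed.

Lemma weq_cat_winv w w' z : weq R (w ++ w') z -> weq R w (z ++ winv w').
Proof.
move=> /(weq_catr (winv w')); rewrite -catA; apply: weq_trans.
by have := weq_cancel w w' [::]; rewrite !cats0; apply: weq_sym.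
Qed.

Definition wcomm w w' := weq R (w ++ w') (w' ++ w).

Lemma wcomm_sym w w' : wcomm w w' -> wcomm w' w.
Proof. exact: weq_sym. Qed.

Lemma wcomm_nil w : wcomm w [::].
Proof. by rewrite /wcomm cats0; apply: weq_refl. Qed.

Lemma wcomm_nseq i j l : wcomm (nseq i l) (nseq j l).
Proof. by rewrite /wcomm -!nseqD addnC; apply: weq_refl. Qed.

Lemma wcomm_cat x w w' : wcomm x w -> wcomm x w' -> wcomm x (w ++ w').
Proof.
move=> xw xw'; rewrite /wcomm.
apply: weq_trans (_ : weq R (w ++ x ++ w') _); first by rewrite !catA; apply: weq_catr.
by rewrite -catA; apply: weq_catl.
Qed.

Lemma wcomm_winv x w : wcomm x w -> wcomm (winv x) w.
Proof.
move=> xw; rewrite /wcomm.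
apply: weq_trans (_ : weq R (winv x ++ w ++ x ++ winv x) _).
  by apply: weq_sym; have := weq_cancel (winv x ++ w) x [::]; rewrite !cats0 -!catA.
apply: weq_trans (_ : weq R (winv x ++ x ++ w ++ winv x) _).
  by have := weq_cat (winv x) (winv x) (weq_sym xw); rewrite -!catA.
exact: weq_cancel_inv [::] x (w ++ winv x).
Qed.

Lemma wcomm_winvr x w : wcomm x w -> wcomm x (winv w).
Proof. by move=> /wcomm_sym /wcomm_winv /wcomm_sym. Qed.

Lemma wcomm_nseq_mul x q j l : wcomm x (nseq q l) -> wcomm x (nseq (q * j) l).
Proof.
move=> xl; elim: j => [|j IH]; first by rewrite muln0; apply: wcomm_nil.
by rewrite mulnS nseqD; apply: wcomm_cat.
Qed.

Lemma wcomm_relator x y : List.In (comm x y) R -> wcomm x y.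
Proof.
move=> Rxy; apply: weq_sym; rewrite /wcomm.
apply: weq_trans (_ : weq R (y ++ x ++ comm x y) _).
  apply: weq_sym; apply: rst_step.
  by have := step_rel (y ++ x) [::] Rxy; rewrite !cats0 -catA.
apply: weq_trans (weq_cancel y x (winv y ++ x ++ y)) _.
exact: weq_cancel [::] y (x ++ y).
Qed.

End WordEquality.

Lemma weq_sub R R' w w' : (forall r, List.In r R -> List.In r R') ->
  weq R w w' -> weq R' w w'.
Proof.
move=> RR'; elim=> [x y xy|x|x y _ IH|x y z _ IHxy _ IHyz].
- by apply: rst_step; case: xy => [p q l|p q r /RR' R'r]; [apply: step_free|apply: step_rel].
- exact: weq_refl.
- exact: weq_sym.
- exact: weq_trans IHxy IHyz.
Qed.

Section SubgroupWords.
Variable S : seq word.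

Lemma in_gen_cat w w' : in_gen S w -> in_gen S w' -> in_gen S (w ++ w').
Proof.
move=> Sw Sw'; elim: Sw => [|s x Ss _ IH|s x Ss _ IH] //; rewrite -catA.
  exact: gen_cons.
exact: gen_consinv.
Qed.

Lemma in_gen_winv w : in_gen S w -> in_gen S (winv w).
Proof.
elim=> {w} [|s w Ss _ IH|s w Ss _ IH]; first exact: gen_nil.
  rewrite winv_cat; apply: in_gen_cat IH _.
  by rewrite -[winv s]cats0; apply: gen_consinv Ss (gen_nil S).
rewrite winv_cat winvK; apply: in_gen_cat IH _.
by rewrite -[s]cats0; apply: gen_cons Ss (gen_nil S).
Qed.

Lemma in_gen_nseq_mul q j g b : List.In (nseq q (g, false)) S ->
  in_gen S (nseq (q * j) (g, b)).
Proof.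
move=> Sq; elim: j => [|j IH]; first by rewrite muln0; apply: gen_nil.
rewrite mulnS nseqD; case: b IH => IH; last exact: gen_cons.
by have := gen_consinv Sq IH; rewrite winv_nseq.
Qed.

End SubgroupWords.

Lemma in_gen_sub S S' w : (forall s, List.In s S -> List.In s S') ->
  in_gen S w -> in_gen S' w.
Proof.
move=> SS'; elim=> {w} [|s w Ss _ IH|s w Ss _ IH]; first exact: gen_nil.
  by apply: gen_cons IH; apply: SS'.
by apply: gen_consinv IH; apply: SS'.
Qed.

Lemma mem_sub_sub R S S' g : (forall s, List.In s S -> List.In s S') ->
  mem_sub R S g -> mem_sub R S' g.
Proof. by move=> SS' [h [Sh gh]]; exists h; split=> //; apply: in_gen_sub Sh. Qed.

Definition syl := (letter * nat)%type.
Definition syl_gen (x : syl) : bool := x.1.1.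
Definition syl_word (x : syl) : word := nseq x.2 x.1.
Definition syl_cat (s : seq syl) (w : word) : word := foldr (fun x => cat (syl_word x)) w s.
Definition alternating (s : seq syl) := sorted (fun x y => syl_gen x != syl_gen y) s.

Lemma syl_cat_cons x s w : syl_cat (x :: s) w = syl_word x ++ syl_cat s w.
Proof. by []. Qed.

Lemma syl_cat_cat s w : syl_cat s [::] ++ w = syl_cat s w.
Proof. by elim: s => //= x s <-; rewrite catA. Qed.

Lemma alternating_cons x s : alternating (x :: s) =
  (if s is y :: _ then syl_gen x != syl_gen y else true) && alternating s.
Proof. by case: s. Qed.

Lemma alternating_head x x' s : syl_gen x = syl_gen x' ->
  alternating (x :: s) = alternating (x' :: s).
Proof. by rewrite !alternating_cons => ->. Qed.

Lemma modn_mul_sign k N (b : bool) : 0 < k < N ->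
  (k * (if b then N.-1 else 1)) %% N != 0.
Proof.
case/andP=> k_gt0 k_lt; case: b; last by rewrite muln1 modn_small // -lt0n.
apply/negP => dvd; have : N %| k * N.-1 + k.
  by rewrite -mulnSr prednK ?dvdn_mull // (ltn_trans k_gt0 k_lt).
by rewrite dvdn_addr // => /(dvdn_leq k_gt0); rewrite leqNgt k_lt.
Qed.

Section FreeProductOfCyclics.
Variable ord : bool -> nat.
Hypothesis ord_gt0 : forall g, 0 < ord g.

(* Reduced words of the free product of cyclic groups of orders [ord false] and [ord true]:
   syllables [(g, k)] with [0 < k < ord g], consecutive syllables on distinct generators.
   [fp_mul g e x] is [g^e x]; the inverse letter [(g, true)] acts as [g^(ord g - 1)]. *)
Definition fp_cons g e (x : seq (bool * nat)) :=
  if e %% ord g == 0 then x else (g, e %% ord g) :: x.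

Definition fp_mul g e (x : seq (bool * nat)) :=
  if x is (g', k) :: x' then
    (if g' == g then fp_cons g (k + e) x' else fp_cons g e x)
  else fp_cons g e x.

Fixpoint fp_reduced (x : seq (bool * nat)) :=
  if x is (g, k) :: x' then
    [&& 0 < k, k < ord g, fp_reduced x' & ohead (map fst x') != Some g]
  else true.

Definition fp_act (l : letter) x := fp_mul l.1 (if l.2 then (ord l.1).-1 else 1) x.
Definition fp_actw (w : word) x := foldr fp_act x w.
Definition fp_fixes (w : word) := forall x, fp_reduced x -> fp_actw w x = x.

Lemma fp_cons_reduced g e x : fp_reduced x -> ohead (map fst x) != Some g ->
  fp_reduced (fp_cons g e x).
Proof.
move=> x_red fresh; rewrite /fp_cons; case: ifPn => //= e_ord.
by rewrite lt0n e_ord ltn_pmod // x_red fresh.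
Qed.

Lemma fp_mul_fresh g e x : ohead (map fst x) != Some g -> fp_mul g e x = fp_cons g e x.
Proof. by case: x => [|[g' k] x'] //=; case: (g' =P g) => [->|//]; rewrite eqxx. Qed.

Lemma fp_mul_reduced g e x : fp_reduced x -> fp_reduced (fp_mul g e x).
Proof.
case: x => [|[g' k] x'] /=; first by move=> _; apply: fp_cons_reduced.
case/and4P=> k_gt0 k_lt x'_red fresh; case: (g' =P g) => [<-|ne]; first exact: fp_cons_reduced.
apply: fp_cons_reduced => /=; first by rewrite k_gt0 k_lt x'_red fresh.
by apply/eqP => -[].
Qed.

Lemma fp_mul_cons g e f x : ohead (map fst x) != Some g ->
  fp_mul g e (fp_cons g f x) = fp_cons g (f + e) x.
Proof.
move=> fresh; rewrite {1}/fp_cons; case: eqP => [f_mod|_].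
  by rewrite fp_mul_fresh // /fp_cons -modnDml f_mod.
by rewrite /= eqxx /fp_cons modnDml.
Qed.

Lemma fp_mulD g e f x : fp_reduced x -> fp_mul g e (fp_mul g f x) = fp_mul g (f + e) x.
Proof.
case: x => [|[g' k] x'] /=; first by move=> _; rewrite fp_mul_cons.
case/and4P=> _ _ _ fresh; case: (g' =P g) => [<-|ne]; first by rewrite fp_mul_cons // addnA.
by rewrite fp_mul_cons //=; apply/eqP => -[].
Qed.

Lemma fp_mul_ord g e x : fp_reduced x -> ord g %| e -> fp_mul g e x = x.
Proof.
rewrite /dvdn => x_red /eqP e_mod; case: x x_red => [_|[g' k] x' /and4P[k_gt0 k_lt _ _]] /=.
  by rewrite /fp_cons e_mod.
case: (g' =P g) k_lt => [->|_] k_lt; last by rewrite /fp_cons e_mod.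
by rewrite /fp_cons -modnDmr e_mod addn0 modn_small // eqn0Ngt k_gt0.
Qed.

Lemma fp_actw_cat w w' x : fp_actw (w ++ w') x = fp_actw w (fp_actw w' x).
Proof. by rewrite /fp_actw foldr_cat. Qed.

Lemma fp_actw_reduced w x : fp_reduced x -> fp_reduced (fp_actw w x).
Proof. by move=> x_red; elim: w => //= l w; apply: fp_mul_reduced. Qed.

Lemma fp_act_linv l x : fp_reduced x -> fp_act (linv l) (fp_act l x) = x.
Proof.
case: l => g b x_red; rewrite /fp_act /= fp_mulD // fp_mul_ord //.
by case: b; rewrite /= ?addn1 ?add1n prednK.
Qed.

Lemma fp_actw_winv w x : fp_reduced x -> fp_actw (winv w) (fp_actw w x) = x.
Proof.
elim: w x => // l w IH x x_red; rewrite -cat1s winv_cat !fp_actw_cat.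
by rewrite /= fp_act_linv ?IH // fp_actw_reduced.
Qed.

Lemma fp_actw_nseq k g b x : fp_reduced x ->
  fp_actw (nseq k (g, b)) x = fp_mul g (k * (if b then (ord g).-1 else 1)) x.
Proof.
move=> x_red; elim: k => [|k IH] /=; first by rewrite fp_mul_ord.
by rewrite /fp_act /= IH fp_mulD // mulSn addnC.
Qed.

Lemma fp_fixes_nseq k g b : ord g %| k -> fp_fixes (nseq k (g, b)).
Proof. by move=> dvd_k x x_red; rewrite fp_actw_nseq // fp_mul_ord // dvdn_mulr. Qed.

Lemma fp_fixes_winv w : fp_fixes w -> fp_fixes (winv w).
Proof. by move=> fix_w x x_red; rewrite -{1}(fix_w x x_red) fp_actw_winv. Qed.

Lemma fp_fixes_comm w w' : fp_fixes w \/ fp_fixes w' -> fp_fixes (comm w w').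
Proof.
move=> fix_ww' x x_red; rewrite /comm !fp_actw_cat.
case: fix_ww' => [fix_w|fix_w'].
  by rewrite fix_w ?fp_actw_reduced // fp_actw_winv // fp_fixes_winv.
by rewrite fix_w' // (fp_fixes_winv fix_w') ?fp_actw_reduced // fp_actw_winv.
Qed.

Lemma fp_actw_weq R w w' : (forall r, List.In r R -> fp_fixes r) -> weq R w w' ->
  forall x, fp_reduced x -> fp_actw w x = fp_actw w' x.
Proof.
move=> R_fix; elim=> [y z yz|y|y z _ IH|y z z' _ IHyz _ IHzz'] x x_red //.
- case: yz => [p q l|p q r Rr]; rewrite !fp_actw_cat; congr (fp_actw p _).
    by have := fp_act_linv (linv l) (fp_actw_reduced q x_red); rewrite linvK.
  by rewrite R_fix // fp_actw_reduced.
- by rewrite IH.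
- by rewrite IHyz ?IHzz'.
Qed.

Lemma fp_actw_syl_cat s : alternating s -> all (fun x => 0 < x.2 < ord (syl_gen x)) s ->
  map fst (fp_actw (syl_cat s [::]) [::]) = map syl_gen s.
Proof.
elim: s => // [[[g b] k] s IH]; rewrite alternating_cons => /andP[fresh alt_s].
case/andP=> k_bnd bnd_s; have {}IH := IH alt_s bnd_s.
have {}k_bnd : 0 < k < ord g := k_bnd.
rewrite syl_cat_cons fp_actw_cat fp_actw_nseq ?fp_actw_reduced // fp_mul_fresh; last first.
  rewrite IH; case: s fresh {IH alt_s bnd_s} => //= y s.
  by apply: contraNneq => -[->].
by rewrite /fp_cons (negbTE (modn_mul_sign b k_bnd)) /= IH.
Qed.

Lemma fp_cons_tagged g e x : all (pred1 g) (map fst x) ->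
  all (pred1 g) (map fst (fp_cons g e x)).
Proof. by rewrite /fp_cons; case: eqP => //= _ ->; rewrite eqxx. Qed.

Lemma fp_mul_tagged g e x : all (pred1 g) (map fst x) ->
  all (pred1 g) (map fst (fp_mul g e x)).
Proof.
case: x => [|[g' k] x']; first exact: fp_cons_tagged.
by case/andP=> /eqP /= -> x'_tag; rewrite /= eqxx; apply: fp_cons_tagged.
Qed.

Lemma fp_actw_tagged S g w x :
  (forall s, List.In s S -> fp_fixes s \/ exists k, s = nseq k (g, false)) ->
  in_gen S w -> fp_reduced x -> all (pred1 g) (map fst x) ->
  all (pred1 g) (map fst (fp_actw w x)).
Proof.
move=> S_gens Sw x_red x_tag; elim: Sw => {w} [|s w Ss _ IH|s w Ss _ IH] //;
  rewrite fp_actw_cat; have w_red := fp_actw_reduced w x_red.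
  case: (S_gens s Ss) => [fix_s|[k ->]]; first by rewrite fix_s.
  by rewrite fp_actw_nseq //; apply: fp_mul_tagged.
case: (S_gens s Ss) => [fix_s|[k ->]]; first by rewrite fp_fixes_winv.
by rewrite winv_nseq fp_actw_nseq //; apply: fp_mul_tagged.
Qed.

End FreeProductOfCyclics.

Section NormalForm.
Variables (R : seq word) (u : bool) (p q : nat).
Hypotheses (p_gt1 : 1 < p) (q_gt0 : 0 < q).
Local Notation U := (nseq p (u, false)).
Local Notation V := (nseq q (~~ u, false)).
Hypothesis UV : wcomm R U V.

(* Normal form in <u, u^p, v^q>: an alternating product of syllables u^k (0 < k < p) and
   v^(+-qj) (j > 0), followed by a word in u^p and v^q. *)
Definition nf_syl (x : syl) :=
  if syl_gen x == u then (x.1.2 == false) && (0 < x.2 < p) else (0 < x.2) && (q %| x.2).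

Definition in_nf h := exists s hh,
  [/\ all nf_syl s, alternating s, in_gen [:: U; V] hh & weq R h (syl_cat s hh)].

Lemma in_nf_weq h h' : weq R h' h -> in_nf h -> in_nf h'.
Proof.
by move=> h'h [s [hh [nf_s alt_s Hhh hs]]]; exists s, hh; split=> //; apply: weq_trans hs.
Qed.

Lemma nf_syl_v x : nf_syl x -> syl_gen x != u ->
  exists j b, x = (~~ u, b, q * j) /\ 0 < j.
Proof.
case: x => [[g b] k]; rewrite /nf_syl /syl_gen /= => nf_x g_ne_u.
move: nf_x; rewrite (negbTE g_ne_u) => /andP[k_gt0 /dvdnP[j k_eq]]; exists j, b.
rewrite k_eq muln_gt0 in k_gt0; case/andP: k_gt0 => j_gt0 _; split=> //.
by rewrite k_eq mulnC; case: g u g_ne_u => [] [].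
Qed.

Lemma nf_syl_u x : nf_syl x -> syl_gen x = u -> exists k, x = (u, false, k) /\ 0 < k < p.
Proof.
case: x => [[g b] k]; rewrite /nf_syl /syl_gen /= => + g_u; rewrite g_u eqxx.
by case/andP=> /eqP -> k_bnd; exists k.
Qed.

Lemma wcomm_U_syl_word x : nf_syl x -> wcomm R U (syl_word x).
Proof.
move=> nf_x; case: (eqVneq (syl_gen x) u) => [gen_u|/(nf_syl_v nf_x)[j [[] [-> _]]]].
- case: x gen_u nf_x => [[g b] k]; rewrite /nf_syl /syl_gen /= => -> /[!eqxx] /andP[/eqP -> _].
  exact: wcomm_nseq.
- rewrite /syl_word /= -[(_, true)]/(linv (_, false)) -winv_nseq.
  exact/wcomm_winvr/wcomm_nseq_mul.
- exact: wcomm_nseq_mul.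
Qed.

Lemma weq_U_syl_cat b s w : all nf_syl s ->
  weq R (nseq p (u, b) ++ syl_cat s w) (syl_cat s (nseq p (u, b) ++ w)).
Proof.
elim: s => [|x s IH] /=; first by move=> _; apply: weq_refl.
case/andP=> nf_x /IH /(weq_catl (syl_word x)) {IH}; apply: weq_trans; rewrite !catA.
apply: weq_catr; have := wcomm_U_syl_word nf_x; case: b => //.
by rewrite -[(u, true)]/(linv (u, false)) -winv_nseq; apply: wcomm_winv.
Qed.

Lemma in_nf_syl_cat s hh : all nf_syl s -> alternating s -> in_gen [:: U; V] hh ->
  in_nf (syl_cat s hh).
Proof. by move=> nf_s alt_s Hhh; exists s, hh; split=> //; apply: weq_refl. Qed.

Lemma in_nf_catU b h : in_nf h -> in_nf (nseq p (u, b) ++ h).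
Proof.
case=> s [hh [nf_s alt_s Hhh /(weq_catl (nseq p (u, b))) /weq_trans hs]].
exists s, (nseq p (u, b) ++ hh); split=> //; last exact/hs/weq_U_syl_cat.
by apply: in_gen_cat Hhh; have := @in_gen_nseq_mul _ p 1 u b; rewrite muln1; apply; left.
Qed.

Lemma in_nf_u h : in_nf h -> in_nf ((u, false) :: h).
Proof.
case=> s [hh [nf_s alt_s Hhh /(weq_catl [:: (u, false)]) /in_nf_weq]]; apply.
have nf_u1 : nf_syl (u, false, 1) by rewrite /nf_syl /syl_gen /= eqxx.
case: s nf_s alt_s => [|x s] nf_s alt_s.
  by apply: (@in_nf_syl_cat [:: (u, false, 1)]) => //=; rewrite nf_u1.
case: (eqVneq (syl_gen x) u) => [gen_u|gen_ne_u]; last first.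
  apply: (@in_nf_syl_cat ((u, false, 1) :: x :: s)) => //; first exact/andP.
  by apply/andP; split; [rewrite eq_sym | exact: alt_s].
case/andP: nf_s => /nf_syl_u/(_ gen_u) [k [x_eq /andP[k_gt0 k_lt]]] nf_s; subst x.
case: (ltnP k.+1 p) => [k1_lt|k1_ge].
  apply: (@in_nf_syl_cat ((u, false, k.+1) :: s)) => //.
    by apply/andP; split; rewrite // /nf_syl /syl_gen /= eqxx k1_lt.
  by rewrite (@alternating_head _ (u, false, k)).
change (in_nf (nseq k.+1 (u, false) ++ syl_cat s hh)); rewrite (_ : k.+1 = p); last lia.
by apply/in_nf_catU/in_nf_syl_cat => //; apply: path_sorted alt_s.
Qed.

Lemma in_nf_uinv h : in_nf h -> in_nf ((u, true) :: h).
Proof.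
have in_nf_uk k h' : in_nf h' -> in_nf (nseq k (u, false) ++ h').
  by move=> nf_h'; elim: k => // k IH; apply: in_nf_u.
move=> /(in_nf_uk p.-1) /(in_nf_catU true); apply: in_nf_weq.
have -> : nseq p (u, true) = [:: (u, true)] ++ winv (nseq p.-1 (u, false)).
  by rewrite winv_nseq -{1}(prednK (ltnW p_gt1)).
by rewrite -catA; apply/weq_sym/weq_cancel_inv.
Qed.

Lemma in_nf_v b h : in_nf h -> in_nf (nseq q (~~ u, b) ++ h).
Proof.
case=> s [hh [nf_s alt_s Hhh /(weq_catl (nseq q (~~ u, b))) /in_nf_weq]]; apply.
have nvu : (~~ u == u) = false by case: (u).
have nf_vk c k : nf_syl (~~ u, c, k) = (0 < k) && (q %| k) by rewrite /nf_syl /syl_gen /= nvu.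
case: s nf_s alt_s => [|x s] nf_s alt_s.
  by apply: (@in_nf_syl_cat [:: (~~ u, b, q)]) => //=; rewrite nf_vk q_gt0 dvdnn.
case: (eqVneq (syl_gen x) u) => [gen_u|gen_ne_u].
  apply: (@in_nf_syl_cat ((~~ u, b, q) :: x :: s)) => //.
    by apply/andP; split; rewrite // nf_vk q_gt0 dvdnn.
  by apply/andP; split; [rewrite gen_u /syl_gen /= nvu | exact: alt_s].
case/andP: nf_s => /nf_syl_v/(_ gen_ne_u) [j [c [x_eq j_gt0]]] nf_s; subst x.
rewrite syl_cat_cons /syl_word /=; case: (c =P b) => [c_b|/eqP c_ne_b].
  subst c; rewrite catA -nseqD -mulnS; apply: (@in_nf_syl_cat ((~~ u, b, q * j.+1) :: s)) => //.
    by apply/andP; split; rewrite // nf_vk muln_gt0 q_gt0 dvdn_mulr.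
  by rewrite (@alternating_head _ (~~ u, b, q * j)).
have c_nb : c = ~~ b by move: c_ne_b; case: (b); case: (c).
subst c; rewrite -[(~~ u, ~~ b)]/(linv (~~ u, b)).
apply: (in_nf_weq (weq_nseq_cancel R _ _ (leq_pmulr q j_gt0))).
rewrite -{2}(muln1 q) -mulnBr subn1; case: (eqVneq j 1) => [->|j_ne1].
  by rewrite muln0; apply: in_nf_syl_cat => //; apply: path_sorted alt_s.
apply: (@in_nf_syl_cat ((~~ u, ~~ b, q * j.-1) :: s)) => //.
  apply/andP; split; rewrite // nf_vk muln_gt0 q_gt0 dvdn_mulr // andbT /=; lia.
by rewrite (@alternating_head _ (~~ u, ~~ b, q * j)).
Qed.

Lemma in_nf_of_in_gen h : in_gen [:: [:: (u, false)]; U; V] h -> in_nf h.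
Proof.
elim=> {h} [|s h Ss _ IH|s h Ss _ IH].
- by apply: (@in_nf_syl_cat [::] [::]) => //; apply: gen_nil.
- by case: Ss => [<-|[<-|[<-|[]]]]; [apply: in_nf_u | apply: in_nf_catU | apply: in_nf_v].
- by case: Ss => [<-|[<-|[<-|[]]]]; rewrite ?winv_nseq;
    [apply: in_nf_uinv | apply: in_nf_catU | apply: in_nf_v].
Qed.

Lemma syl_cat_in_gen s hh : all nf_syl s -> ~~ has (fun x => syl_gen x == u) s ->
  in_gen [:: U; V] hh -> in_gen [:: U; V] (syl_cat s hh).
Proof.
elim: s => [|x s IH] //=; case/andP=> nf_x nf_s; rewrite negb_or => /andP[x_ne_u no_u] Hhh.
have [j [b [-> _]]] := nf_syl_v nf_x x_ne_u.
by apply: in_gen_cat (IH nf_s no_u Hhh); apply: in_gen_nseq_mul; right; left.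
Qed.

End NormalForm.

Lemma leq_sumn_map (T : eqType) (f : T -> nat) s x : x \in s -> f x <= sumn (map f s).
Proof.
elim: s => //= y s IH; rewrite in_cons => /predU1P[->|/IH le_fx]; first exact: leq_addr.
exact: leq_trans le_fx (leq_addl _ _).
Qed.

Definition orders (u : bool) (p Q : nat) (g : bool) := if g == u then p else Q.

Lemma orders_gt0 u p Q g : 0 < p -> 0 < Q -> 0 < orders u p Q g.
Proof. by rewrite /orders; case: ifP. Qed.

Section Separation.
Variables (u : bool) (p q : nat) (R : seq word) (Rt : nat -> seq word).
Hypotheses (p_gt1 : 1 < p) (q_gt0 : 0 < q).
Local Notation U := (nseq p (u, false)).
Local Notation V := (nseq q (~~ u, false)).
Hypothesis UV : wcomm R U V.
Hypothesis R_sub : forall t r, List.In r R -> List.In r (Rt t).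
Hypothesis Rt_fixes :
  forall t, 0 < t -> forall r, List.In r (Rt t) -> fp_fixes (orders u p (q * t)) r.

Lemma syl_cat_notin_quotient t s h : 0 < t ->
  all (nf_syl u p q) s -> alternating s -> has (fun x => syl_gen x == u) s ->
  sumn (map snd s) < t -> in_gen [:: U; V] h -> ~ weq (Rt t) (syl_cat s [::]) h.
Proof.
move=> t_gt0 nf_s alt_s has_u sum_lt Hh eq_sh.
set ord := orders u p (q * t).
have nvu : (~~ u == u) = false by case: (u).
have ord_u : ord u = p by rewrite /ord /orders eqxx.
have ord_v : ord (~~ u) = q * t by rewrite /ord /orders nvu.
have ord_gt0 g : 0 < ord g by apply: orders_gt0; rewrite ?muln_gt0 ?q_gt0 // ltnW.
have bnd_s : all (fun x => 0 < x.2 < ord (syl_gen x)) s.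
  apply/allP=> x xs; have nf_x := allP nf_s x xs.
  case: (eqVneq (syl_gen x) u) => [gen_u|gen_ne_u].
    by have [k [-> k_bnd]] := nf_syl_u nf_x gen_u; rewrite /syl_gen /= ord_u.
  have [j [b [x_eq j_gt0]]] := nf_syl_v nf_x gen_ne_u; have le_sum := leq_sumn_map snd xs.
  rewrite x_eq /syl_gen /= ord_v muln_gt0 q_gt0 j_gt0 /=.
  rewrite x_eq /= in le_sum; apply: leq_trans (leq_pmull t q_gt0).
  exact: leq_ltn_trans le_sum sum_lt.
have H_gens r : List.In r [:: U; V] -> fp_fixes ord r \/ exists k, r = nseq k (~~ u, false).
  by case=> [<-|[<-|[]]]; [left; apply: fp_fixes_nseq; rewrite ?ord_u | right; exists q].
have := fp_actw_tagged ord_gt0 H_gens Hh (erefl : fp_reduced ord [::]) (erefl : all _ [::]).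
rewrite -(fp_actw_weq ord_gt0 (Rt_fixes t_gt0) eq_sh) // fp_actw_syl_cat // all_map.
move=> /allP all_v; case/hasP: has_u => x /all_v /= /eqP -> /eqP.
by case: (u).
Qed.

Theorem not_mem_sub_quotients g :
  mem_sub R [:: [:: (u, false)]; U; V] g -> ~ mem_sub R [:: U; V] g ->
  exists t0, 1 < t0 /\ forall t, 0 < t -> t0 %| t -> ~ mem_sub (Rt t) [:: U; V] g.
Proof.
case=> h [Gh /weq_trans gh] gNH.
have [s [hh [nf_s alt_s Hhh /gh gs]]] := in_nf_of_in_gen p_gt1 q_gt0 UV Gh.
have [has_u|no_u] := boolP (has (fun x => syl_gen x == u) s); last first.
  by case: gNH; exists (syl_cat s hh); split=> //; apply: syl_cat_in_gen.
(* Beyond every v-exponent of s, the v-syllables stay nontrivial modulo q t. *)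
exists (sumn (map snd s)).+2; split=> // t t_gt0 /(dvdn_leq t_gt0) t0_le [h' [Hh' gh']].
apply: (syl_cat_notin_quotient t_gt0 nf_s alt_s has_u (ltnW t0_le)).
  exact: in_gen_cat Hh' (in_gen_winv Hhh).
apply: weq_cat_winv; rewrite syl_cat_cat.
exact: weq_trans (weq_sym (weq_sub (R_sub t) gs)) gh'.
Qed.
End Separation.

Lemma rels_t_fixes ord m n t : (forall g, 0 < ord g) ->
  ord false %| m * t -> ord true %| n * t -> ord false %| m \/ ord true %| n ->
  forall r, List.In r (rels_t m n t) -> fp_fixes ord r.
Proof.
move=> ord_gt0 dvd_mt dvd_nt dvd_mn r; case=> [<-|[<-|[<-|[]]]]; try exact: fp_fixes_nseq.
case: dvd_mn => [dvd_m|dvd_n].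
  exact (fp_fixes_comm ord_gt0 (or_introl (fp_fixes_nseq _ dvd_m))).
exact (fp_fixes_comm ord_gt0 (or_intror (fp_fixes_nseq _ dvd_n))).
Qed.

Lemma rels_t_fixes_orders (u : bool) m n : 1 < m -> 1 < n -> forall t, 0 < t ->
  forall r, List.In r (rels_t m n t) ->
  fp_fixes (orders u (if u then n else m) ((if u then m else n) * t)) r.
Proof.
move=> m_gt1 n_gt1 t t_gt0; apply: rels_t_fixes.
- by move=> g; apply: orders_gt0; case: (u); rewrite ?muln_gt0 ?t_gt0 ?andbT; apply: ltnW.
- by rewrite /orders; case: (u); [apply: dvdnn | apply/dvdn_mulr/dvdnn].
- by rewrite /orders; case: (u); [apply/dvdn_mulr/dvdnn | apply: dvdnn].
- by rewrite /orders; case: (u) => /=; [right|left].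
Qed.

Theorem proposition2p4 (m n : nat) (g : word) :
  1 < m -> 1 < n ->
  (mem_sub (rels m n) (Agens m n) g \/ mem_sub (rels m n) (Bgens m n) g) ->
  ~ mem_sub (rels m n) (Hgens m n) g ->
  exists t0 : nat, 1 < t0 /\
    forall t : nat, 0 < t -> t0 %| t ->
      ~ mem_sub (rels_t m n t) (Hgens m n) g.
Proof.
move=> m_gt1 n_gt1 gAB gNH.
have UV : wcomm (rels m n) (apow m) (bpow n) by apply: wcomm_relator; left.
have R_sub t r : List.In r (rels m n) -> List.In r (rels_t m n t) by case=> [<-|[]]; left.
case: gAB => [gA|gB].
  apply: (not_mem_sub_quotients m_gt1 (ltnW n_gt1) UV R_sub _ gA gNH).
  exact (rels_t_fixes_orders (u := false) m_gt1 n_gt1).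
have H_sub r : List.In r (Hgens m n) <-> List.In r [:: bpow n; apow m].
  by split; case=> [<-|[<-|[]]]; [right; left | left | right; left | left].
have B_sub r : List.In r (Bgens m n) -> List.In r [:: bpow 1; bpow n; apow m].
  by case=> [<-|[<-|[<-|[]]]]; [left | right; right; left | right; left].
have [|t0 [t0_gt1 sep]] := not_mem_sub_quotients n_gt1 (ltnW m_gt1) (wcomm_sym UV) R_sub _
  (mem_sub_sub B_sub gB) (fun gH => gNH (mem_sub_sub (fun r => proj2 (H_sub r)) gH)).
  exact (rels_t_fixes_orders (u := true) m_gt1 n_gt1).
by exists t0; split=> // t t_gt0 t0_t /(mem_sub_sub (fun r => proj1 (H_sub r))); apply: sep.
Qed.
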